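(* Let $s\in(0,1)$. There exists a constant $c>0$ depending only on $s$ such that for every finite set $\Gamma\subset\mathbb Z^d$, $$\sum_{i\in\Gamma,\ j\in\mathbb Z^d\setminus\Gamma}\frac{1}{|i-j|_\infty^{d+s}}\ge c\,(\#\Gamma)^{\frac{d-s}{d}}.$$
   Context: $d\ge2$; $|x|_\infty:=\max_n|x_n|$ for $x\in\mathbb Z^d$; $\#\Gamma$ denotes the cardinality of $\Gamma$. *)

From Stdlib Require Import Reals ZArith List.
Open Scope R_scope.

Definition is_pt (d : nat) (x : list Z) : Prop := length x = d.

Definition linf_dist (x y : list Z) : Z :=
  fold_right Z.max 0%Z (map (fun p => Z.abs (fst p - snd p)) (combine x y)).

(* x^y for x >= 0, with the convention 0^y = 0 (y > 0). *)
Definition rpow (x y : R) : R :=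
  if Rle_dec x 0 then 0 else Rpower x y.

Definition Rsum (l : list R) : R := fold_right Rplus 0 l.

Definition kern (d : nat) (s : R) (i j : list Z) : R :=
  / rpow (IZR (linf_dist i j)) (INR d + s).

(* Finite partial sums of  sum_{i in G, j in Z^d \ G} kern d s i j :
   sums over i in G and j ranging over a finite duplicate-free list L of
   points of Z^d \ G. *)
Definition partial_sums (d : nat) (s : R) (G : list (list Z)) (r : R) : Prop :=
  exists L : list (list Z),
    NoDup L /\ (forall j, In j L -> is_pt d j /\ ~ In j G) /\
    r = Rsum (map (fun i => Rsum (map (fun j => kern d s i j) L)) G).

(* S is the value of the (nonnegative) series: the supremum of its finite
   partial sums (this also asserts convergence). *)
Definition boundary_sum (d : nat) (s : R) (G : list (list Z)) (S : R) : Prop :=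
  is_lub (partial_sums d s G) S.

From Stdlib Require Import Reals ZArith List Lia Lra.
Open Scope R_scope.

(* With n = #G and r = ceil (n^(1/d)), the box of radius r around a point of G
   has (2r+1)^d >= 2 r^d points, so at least r^d of them lie outside G, each at
   distance at most r; the row of i therefore contributes at least
   r^d r^-(d+s) = r^-s >= 1 / (2 n^(s/d)) (using s <= 1), and summing over the
   n rows gives n^((d-s)/d) / 2.  The series converges because the points at
   distance in [2^k, 2^(k+1)) number O(2^(kd)), so a row is dominated by a
   geometric series in 2^-s (using s > 0). *)

Lemma Rsum_app (l1 l2 : list R) : Rsum (l1 ++ l2) = Rsum l1 + Rsum l2.
Proof. induction l1 as [|a l1 IH]; simpl; [lra | rewrite IH; lra]. Qed.

Lemma Rsum_map_nonneg {A} (f : A -> R) (l : list A) :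
  (forall x, In x l -> 0 <= f x) -> 0 <= Rsum (map f l).
Proof.
  induction l as [|a l IH]; simpl; intros H; [lra|].
  assert (0 <= f a) by auto. assert (0 <= Rsum (map f l)) by auto.
  lra.
Qed.

Lemma Rsum_map_ge_const {A} (f : A -> R) (l : list A) (c : R) :
  (forall x, In x l -> c <= f x) -> INR (length l) * c <= Rsum (map f l).
Proof.
  induction l as [|a l IH]; intros H; simpl Rsum; simpl length; [simpl; lra|].
  rewrite S_INR.
  assert (c <= f a) by (apply H; left; auto).
  assert (INR (length l) * c <= Rsum (map f l)) by (apply IH; intros; apply H; right; auto).
  lra.
Qed.

Lemma Rsum_map_le_const {A} (f : A -> R) (l : list A) (c : R) :
  (forall x, In x l -> f x <= c) -> Rsum (map f l) <= INR (length l) * c.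
Proof.
  induction l as [|a l IH]; intros H; simpl Rsum; simpl length; [simpl; lra|].
  rewrite S_INR.
  assert (f a <= c) by (apply H; left; auto).
  assert (Rsum (map f l) <= INR (length l) * c) by (apply IH; intros; apply H; right; auto).
  lra.
Qed.

Lemma Rsum_map_incl {A} (f : A -> R) (B L : list A) :
  NoDup B -> incl B L -> (forall x, In x L -> 0 <= f x) ->
  Rsum (map f B) <= Rsum (map f L).
Proof.
  revert L; induction B as [|a B IH]; intros L HB HBL Hf; simpl.
  - apply Rsum_map_nonneg; auto.
  - apply NoDup_cons_iff in HB as [HaB HB].
    destruct (in_split a L (HBL a (or_introl eq_refl))) as [l1 [l2 ->]].
    assert (Rsum (map f B) <= Rsum (map f (l1 ++ l2))).
    { apply IH; auto.
      - intros x Hx. assert (Hx' : In x (l1 ++ a :: l2)) by (apply HBL; right; auto).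
        apply in_app_or in Hx'. apply in_or_app. destruct Hx' as [H|[<-|H]]; tauto.
      - intros x Hx; apply Hf. apply in_app_or in Hx; apply in_or_app; simpl; tauto. }
    rewrite map_app, Rsum_app in *. simpl. lra.
Qed.

Lemma sum_f_R0_single (p K : nat) (c : R) :
  sum_f_R0 (fun k => if Nat.eqb p k then c else 0) K = if Nat.leb p K then c else 0.
Proof.
  induction K as [|K IH]; simpl.
  - destruct p; reflexivity.
  - rewrite IH. destruct (Nat.eqb_spec p (S K)) as [->|Hne].
    + rewrite (proj2 (Nat.leb_gt (S K) K)), Nat.leb_refl by lia. lra.
    + destruct (Nat.leb_spec p K), (Nat.leb_spec p (S K)); try lia; lra.
Qed.

Lemma Rsum_map_fiberwise {A} (f : A -> R) (m : A -> nat) (K : nat) (L : list A) :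
  (forall x, In x L -> (m x <= K)%nat) ->
  Rsum (map f L) =
  sum_f_R0 (fun k => Rsum (map f (filter (fun x => Nat.eqb (m x) k) L))) K.
Proof.
  induction L as [|a L IH]; intros Hm; simpl.
  - rewrite sum_cte. ring.
  - rewrite IH by (intros; apply Hm; right; auto).
    transitivity (sum_f_R0 (fun k => (if Nat.eqb (m a) k then f a else 0) +
        Rsum (map f (filter (fun x => Nat.eqb (m x) k) L))) K).
    + rewrite sum_plus, sum_f_R0_single.
      rewrite (proj2 (Nat.leb_le _ _)) by (apply Hm; left; auto). reflexivity.
    + apply sum_eq; intros k _. destruct (Nat.eqb (m a) k); simpl; ring.
Qed.

Lemma geometric_sum_le (q : R) (K : nat) :
  0 <= q < 1 -> sum_f_R0 (fun k => q ^ k) K <= / (1 - q).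
Proof.
  intros Hq. pose proof (GP_finite q K).
  assert (0 <= q ^ (K + 1)) by (apply pow_le; lra).
  apply (Rmult_le_reg_r (1 - q)); [lra|]. rewrite Rinv_l by lra. nra.
Qed.

Lemma linf_dist_cons (a b : Z) (x y : list Z) :
  linf_dist (a :: x) (b :: y) = Z.max (Z.abs (a - b)) (linf_dist x y).
Proof. reflexivity. Qed.

Lemma linf_dist_nonneg (x y : list Z) : (0 <= linf_dist x y)%Z.
Proof.
  destruct x, y; unfold linf_dist; simpl; lia.
Qed.

Lemma linf_dist_ge1 (x y : list Z) :
  length x = length y -> x <> y -> (1 <= linf_dist x y)%Z.
Proof.
  revert y; induction x as [|a x IH]; intros [|b y] Hl Hne; simpl in Hl;
    try discriminate; [congruence|].
  rewrite linf_dist_cons. pose proof (linf_dist_nonneg x y).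
  destruct (Z.eq_dec a b) as [<-|]; [|lia].
  assert (x <> y) by congruence. specialize (IH y ltac:(lia) ltac:(assumption)). lia.
Qed.

Definition Zball (a : Z) (r : nat) : list Z :=
  map (fun k => a - Z.of_nat r + Z.of_nat k)%Z (seq 0 (2 * r + 1)).

Lemma length_Zball (a : Z) (r : nat) : length (Zball a r) = (2 * r + 1)%nat.
Proof. unfold Zball; rewrite length_map, length_seq; reflexivity. Qed.

Lemma NoDup_Zball (a : Z) (r : nat) : NoDup (Zball a r).
Proof.
  apply NoDup_map_NoDup_ForallPairs; [|apply seq_NoDup].
  intros x y _ _ H; lia.
Qed.

Lemma In_Zball (a : Z) (r : nat) (z : Z) :
  In z (Zball a r) <-> (Z.abs (a - z) <= Z.of_nat r)%Z.
Proof.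
  unfold Zball; rewrite in_map_iff. split.
  - intros [k [<- Hk]]. apply in_seq in Hk. lia.
  - intros H. exists (Z.to_nat (z - a + Z.of_nat r)). rewrite in_seq. split; lia.
Qed.

Fixpoint box (i : list Z) (r : nat) : list (list Z) :=
  match i with
  | nil => nil :: nil
  | a :: i' => flat_map (fun z => map (cons z) (box i' r)) (Zball a r)
  end.

Lemma length_box (i : list Z) (r : nat) :
  length (box i r) = ((2 * r + 1) ^ length i)%nat.
Proof.
  induction i as [|a i IH]; simpl; auto.
  rewrite (flat_map_constant_length (c := length (box i r))).
  - rewrite length_Zball, IH. reflexivity.
  - intros; apply length_map.
Qed.

Lemma NoDup_flat_map {A B} (f : A -> list B) (l : list A) :
  NoDup l -> (forall x, NoDup (f x)) ->
  (forall x x' y, In y (f x) -> In y (f x') -> x = x') -> NoDup (flat_map f l).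
Proof.
  intros Hl Hf Hd; induction Hl as [|a l Ha Hl IH]; simpl; [constructor|].
  apply NoDup_app; auto.
  intros y Hy Hy'. apply in_flat_map in Hy' as [x' [Hx' Hy']].
  rewrite (Hd _ _ _ Hy Hy') in Ha. contradiction.
Qed.

Lemma NoDup_box (i : list Z) (r : nat) : NoDup (box i r).
Proof.
  induction i as [|a i IH]; simpl; [repeat constructor; simpl; tauto|].
  apply NoDup_flat_map; [apply NoDup_Zball| |].
  - intros z. apply NoDup_map_NoDup_ForallPairs; auto.
    intros x y _ _ H; injection H; auto.
  - intros x x' y H1 H2. apply in_map_iff in H1 as [u [<- _]].
    apply in_map_iff in H2 as [v [H _]]. injection H; auto.
Qed.

Lemma In_box (i : list Z) (r : nat) (j : list Z) :
  In j (box i r) <-> length j = length i /\ (linf_dist i j <= Z.of_nat r)%Z.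
Proof.
  revert j; induction i as [|a i IH]; intros j; simpl.
  - split.
    + intros [<-|[]]. split; auto. unfold linf_dist; simpl; lia.
    + intros [Hl _]. destruct j; simpl in Hl; [auto|discriminate].
  - rewrite in_flat_map. split.
    + intros [z [Hz Hj]]. apply in_map_iff in Hj as [j' [<- Hj']].
      apply IH in Hj'. apply In_Zball in Hz. simpl. rewrite linf_dist_cons. lia.
    + intros [Hl Hd]. destruct j as [|b j]; simpl in Hl; try discriminate.
      rewrite linf_dist_cons in Hd. exists b. split.
      * apply In_Zball; lia.
      * apply in_map, IH. lia.
Qed.

Lemma NoDup_length_le_box (i : list Z) (r : nat) (L : list (list Z)) :
  NoDup L ->
  (forall j, In j L -> length j = length i /\ (linf_dist i j <= Z.of_nat r)%Z) ->
  (length L <= (2 * r + 1) ^ length i)%nat.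
Proof.
  intros HL H. rewrite <- length_box. apply NoDup_incl_length; auto.
  intros j Hj. apply In_box; auto.
Qed.

Lemma rpow_Rpower (x y : R) : 0 < x -> rpow x y = Rpower x y.
Proof. intros H; unfold rpow; destruct (Rle_dec x 0); [lra | reflexivity]. Qed.

Lemma Rpower_pos (x y : R) : 0 < Rpower x y.
Proof. apply exp_pos. Qed.

Lemma Rpower_pow_l (x y : R) (k : nat) : 0 < x -> Rpower (x ^ k) y = Rpower x y ^ k.
Proof.
  intros Hx. rewrite <- !Rpower_pow by (try apply Rpower_pos; lra).
  rewrite !Rpower_mult, Rmult_comm. reflexivity.
Qed.

Lemma kern_nonneg (d : nat) (s : R) (i j : list Z) : 0 <= kern d s i j.
Proof.
  unfold kern, rpow. destruct (Rle_dec _ 0).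
  - rewrite Rinv_0; lra.
  - left; apply Rinv_0_lt_compat, Rpower_pos.
Qed.

Lemma kern_le (d : nat) (s a : R) (i j : list Z) :
  0 <= s -> 0 < a -> a <= IZR (linf_dist i j) ->
  kern d s i j <= / Rpower a (INR d + s).
Proof.
  intros Hs Ha Hd. pose proof (pos_INR d).
  unfold kern. rewrite rpow_Rpower by lra.
  apply Rinv_le_contravar; [apply Rpower_pos|]. apply Rle_Rpower_l; lra.
Qed.

Lemma kern_ge (d : nat) (s b : R) (i j : list Z) :
  0 <= s -> (1 <= linf_dist i j)%Z -> IZR (linf_dist i j) <= b ->
  / Rpower b (INR d + s) <= kern d s i j.
Proof.
  intros Hs H1 Hb. pose proof (pos_INR d). apply IZR_le in H1.
  unfold kern. rewrite rpow_Rpower by lra.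
  apply Rinv_le_contravar; [apply Rpower_pos|]. apply Rle_Rpower_l; lra.
Qed.

(* A dyadic shell around [i] has at most [(5 2^k)^d] points, each contributing
   at most [2^(-k(d+s))]. *)
Lemma shell_sum_le (d : nat) (s : R) (i : list Z) (k : nat) (L : list (list Z)) :
  0 <= s -> length i = d -> NoDup L ->
  (forall j, In j L -> length j = d /\
     (2 ^ Z.of_nat k <= linf_dist i j < 2 ^ (Z.of_nat k + 1))%Z) ->
  Rsum (map (kern d s i) L) <= 5 ^ d * (/ Rpower 2 s) ^ k.
Proof.
  intros Hs Hi HL Hshell.
  set (t := 2 ^ k).
  assert (Ht : 1 <= t) by (apply pow_R1_Rle; lra).
  assert (Hcount : INR (length L) <= (5 * t) ^ d).
  { assert (Hc : (length L <= (2 * 2 ^ (k + 1) + 1) ^ d)%nat).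
    { rewrite <- Hi. apply NoDup_length_le_box; auto.
      intros j Hj. destruct (Hshell j Hj) as [Hl Hd]. split; [congruence|].
      rewrite Nat2Z.inj_pow, Nat2Z.inj_add. simpl (Z.of_nat 2). lia. }
    apply le_INR in Hc. eapply Rle_trans; [exact Hc|].
    rewrite pow_INR. apply pow_incr.
    replace (INR (2 * 2 ^ (k + 1) + 1)) with (4 * t + 1)
      by (unfold t; rewrite plus_INR, mult_INR, pow_INR, pow_add;
          replace (INR 2) with 2 by (simpl; lra); simpl; ring).
    lra. }
  eapply Rle_trans.
  { apply Rsum_map_le_const. intros j Hj. apply (kern_le d s t); [lra|lra|].
    destruct (Hshell j Hj) as [_ [Hlo _]]. unfold t.
    replace 2 with (IZR 2) by reflexivity. rewrite pow_IZR. apply IZR_le. lia. }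
  assert (Htd : 0 < t ^ d) by (apply pow_lt; lra).
  assert (Hts : 0 < Rpower t s) by apply Rpower_pos.
  rewrite Rpower_plus, Rpower_pow by lra.
  apply Rle_trans with ((5 * t) ^ d * / (t ^ d * Rpower t s)).
  - apply Rmult_le_compat_r; [|exact Hcount].
    left; apply Rinv_0_lt_compat; nra.
  - unfold t in *. rewrite Rpower_pow_l, pow_inv, Rpow_mult_distr by lra.
    pose proof (Rpower_pos 2 s).
    right. field. split; [apply pow_nonzero|]; lra.
Qed.

Lemma row_sum_bounded (d : nat) (s : R) : 0 < s ->
  exists B, forall (i : list Z) (L : list (list Z)),
    length i = d -> NoDup L -> (forall j, In j L -> length j = d /\ j <> i) ->
    Rsum (map (kern d s i) L) <= B.
Proof.
  intros Hs.
  set (q := / Rpower 2 s).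
  assert (Hq : 0 < q < 1).
  { assert (1 < Rpower 2 s) by (rewrite <- (Rpower_O 2) by lra; apply Rpower_lt; lra).
    unfold q; split; [apply Rinv_0_lt_compat; lra|].
    rewrite <- Rinv_1. apply Rinv_lt_contravar; lra. }
  exists (5 ^ d * / (1 - q)).
  intros i L Hi HN HL.
  set (m := fun j => Z.to_nat (Z.log2 (linf_dist i j))).
  assert (Hm : forall j, In j L -> length j = d /\
     (2 ^ Z.of_nat (m j) <= linf_dist i j < 2 ^ (Z.of_nat (m j) + 1))%Z).
  { intros j Hj. destruct (HL j Hj) as [Hl Hne]. split; [exact Hl|].
    assert (H1 : (1 <= linf_dist i j)%Z) by (apply linf_dist_ge1; congruence).
    pose proof (Z.log2_spec (linf_dist i j) ltac:(lia)).
    pose proof (Z.log2_nonneg (linf_dist i j)).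
    unfold m. rewrite Z2Nat.id, Z.add_1_r by lia. auto. }
  set (K := list_max (map m L)).
  assert (HK : forall j, In j L -> (m j <= K)%nat).
  { intros j Hj. pose proof (proj1 (list_max_le (map m L) K) (le_n _)) as HK.
    rewrite Forall_forall in HK. apply HK, in_map, Hj. }
  rewrite (Rsum_map_fiberwise _ m K L HK).
  apply Rle_trans with (sum_f_R0 (fun k => 5 ^ d * q ^ k) K).
  - apply sum_Rle. intros k _. apply shell_sum_le; auto; [lra|apply NoDup_filter, HN|].
    intros j Hj. apply filter_In in Hj as [Hj Hk]. apply Nat.eqb_eq in Hk.
    rewrite <- Hk. apply Hm, Hj.
  - replace (sum_f_R0 (fun k => 5 ^ d * q ^ k) K)
      with (5 ^ d * sum_f_R0 (fun k => q ^ k) K)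
      by (rewrite scal_sum; apply sum_eq; intros; ring).
    apply Rmult_le_compat_l; [apply pow_le; lra|].
    apply geometric_sum_le; lra.
Qed.

Lemma boundary_sum_exists (d : nat) (s : R) (G : list (list Z)) :
  0 < s -> Forall (is_pt d) G -> exists S, boundary_sum d s G S.
Proof.
  intros Hs HG. rewrite Forall_forall in HG.
  destruct (row_sum_bounded d s Hs) as [B HB].
  assert (Hbound : bound (partial_sums d s G)).
  { exists (INR (length G) * B). intros r [L [HL [HLG ->]]].
    apply Rsum_map_le_const. intros i Hi. apply HB; [apply HG, Hi | exact HL |].
    intros j Hj. destruct (HLG j Hj) as [Hj' HjG]. split; [exact Hj'|].
    intros ->. contradiction. }
  assert (Hnonempty : exists r, partial_sums d s G r).
  { eexists. exists nil. split; [apply NoDup_nil|]. split; [intros j [] | reflexivity]. }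
  destruct (completeness _ Hbound Hnonempty) as [S HS]. exists S; exact HS.
Qed.

Definition outside (G : list (list Z)) (j : list Z) : bool :=
  if in_dec (list_eq_dec Z.eq_dec) j G then false else true.

Lemma outside_spec (G : list (list Z)) (j : list Z) : outside G j = true <-> ~ In j G.
Proof. unfold outside; destruct in_dec; split; congruence || tauto. Qed.

Lemma length_filter_outside (B G : list (list Z)) :
  NoDup B -> (length B <= length (filter (outside G) B) + length G)%nat.
Proof.
  intros HB. rewrite <- (filter_length (outside G) B).
  apply Nat.add_le_mono_l, NoDup_incl_length; [apply NoDup_filter, HB|].
  intros j Hj. apply filter_In in Hj as [_ Hj]. apply Bool.negb_true_iff in Hj.
  unfold outside in Hj. destruct in_dec; [assumption | discriminate].
Qed.

Lemma row_sum_outside_ge (d : nat) (s : R) (G : list (list Z)) (r : nat) (i : list Z) :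
  (1 <= d)%nat -> 0 <= s -> In i G -> length i = d -> (0 < r)%nat ->
  INR (length G) <= INR r ^ d ->
  / Rpower (INR r) s <= Rsum (map (kern d s i) (filter (outside G) (box i r))).
Proof.
  intros Hd Hs HiG Hi Hr HGr.
  set (Li := filter (outside G) (box i r)).
  apply lt_0_INR in Hr.
  assert (Hrd : 0 < INR r ^ d) by (apply pow_lt; lra).
  assert (Hlen : INR r ^ d <= INR (length Li)).
  { pose proof (length_filter_outside (box i r) G (NoDup_box i r)) as Hc.
    rewrite length_box, Hi in Hc. apply le_INR in Hc.
    rewrite plus_INR, pow_INR, plus_INR, mult_INR in Hc. simpl (INR 1) in Hc.
    replace (INR 2) with 2 in Hc by (simpl; lra).
    assert (H2r : (2 * INR r) ^ d <= (2 * INR r + 1) ^ d) by (apply pow_incr; lra).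
    assert (H2d : 2 <= 2 ^ d).
    { replace d with (S (d - 1)) by lia. simpl.
      pose proof (pow_R1_Rle 2 (d - 1) ltac:(lra)). lra. }
    rewrite Rpow_mult_distr in H2r. fold Li in Hc. nra. }
  assert (Hkern : forall j, In j Li -> / Rpower (INR r) (INR d + s) <= kern d s i j).
  { intros j Hj. apply filter_In in Hj as [Hbox HjG].
    apply In_box in Hbox as [Hl Hdist]. apply outside_spec in HjG.
    apply kern_ge; [exact Hs| |].
    - apply linf_dist_ge1; [congruence|]. intros ->. contradiction.
    - rewrite INR_IZR_INZ. apply IZR_le, Hdist. }
  eapply Rle_trans; [|apply Rsum_map_ge_const; exact Hkern].
  rewrite Rpower_plus, Rpower_pow by lra.
  pose proof (Rpower_pos (INR r) s).
  apply Rle_trans with (INR r ^ d * / (INR r ^ d * Rpower (INR r) s)).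
  - right. field. lra.
  - apply Rmult_le_compat_r; [|exact Hlen]. left; apply Rinv_0_lt_compat. nra.
Qed.

(* [r = ceil (n^(1/d))] works; [2^s <= 2] needs [s <= 1]. *)
Lemma box_radius_exists (d n : nat) (s : R) :
  (1 <= d)%nat -> (1 <= n)%nat -> 0 <= s <= 1 ->
  exists r : nat, (0 < r)%nat /\ INR n <= INR r ^ d /\
    Rpower (INR r) s <= 2 * Rpower (INR n) (s / INR d).
Proof.
  intros Hd Hn Hs. apply le_INR in Hd, Hn. simpl (INR 1) in Hd, Hn.
  set (x := Rpower (INR n) (/ INR d)).
  assert (Hx1 : 1 <= x).
  { unfold x. rewrite <- (Rpower_O (INR n)) by lra.
    apply Rle_Rpower; [lra|]. left; apply Rinv_0_lt_compat; lra. }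
  assert (Hxd : x ^ d = INR n).
  { unfold x. rewrite <- Rpower_pow, Rpower_mult, Rinv_l by (try apply Rpower_pos; lra).
    apply Rpower_1; lra. }
  destruct (archimed x) as [Hup1 Hup2].
  exists (Z.to_nat (up x)).
  assert (Hr : INR (Z.to_nat (up x)) = IZR (up x)).
  { rewrite INR_IZR_INZ, Z2Nat.id; [reflexivity|]. apply le_IZR. lra. }
  rewrite Hr. split; [|split].
  - apply INR_lt. rewrite Hr. simpl. lra.
  - rewrite <- Hxd. apply pow_incr. lra.
  - apply Rle_trans with (Rpower (2 * x) s); [apply Rle_Rpower_l; lra|].
    rewrite <- Rpower_mult_distr by lra.
    replace (s / INR d) with (/ INR d * s) by (unfold Rdiv; ring).
    rewrite <- Rpower_mult. fold x.
    apply Rmult_le_compat_r; [left; apply Rpower_pos|].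
    rewrite <- (Rpower_1 2) at 2 by lra. apply Rle_Rpower; lra.
Qed.

Lemma partial_sums_lower_bound (d : nat) (s : R) (G : list (list Z)) :
  (1 <= d)%nat -> 0 <= s <= 1 -> NoDup G -> Forall (is_pt d) G ->
  exists r, partial_sums d s G r /\
    / 2 * rpow (INR (length G)) ((INR d - s) / INR d) <= r.
Proof.
  intros Hd Hs HN HG. rewrite Forall_forall in HG. unfold is_pt in HG.
  destruct G as [|g G'] eqn:EG.
  { exists 0. split.
    - exists nil. split; [apply NoDup_nil|]. split; [intros j [] | reflexivity].
    - unfold rpow. simpl. destruct (Rle_dec 0 0); lra. }
  rewrite <- EG in *. set (n := length G).
  assert (Hn : (1 <= n)%nat) by (unfold n; rewrite EG; simpl; lia).
  destruct (box_radius_exists d n s Hd Hn Hs) as [r [Hr [Hnr Hrs]]].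
  set (L := nodup (list_eq_dec Z.eq_dec)
              (flat_map (fun i => filter (outside G) (box i r)) G)).
  exists (Rsum (map (fun i => Rsum (map (fun j => kern d s i j) L)) G)). split.
  - exists L. split; [apply NoDup_nodup|]. split; [|reflexivity].
    intros j Hj. unfold L in Hj. rewrite nodup_In, in_flat_map in Hj.
    destruct Hj as [i [Hi Hj]]. apply filter_In in Hj as [Hb HjG].
    apply In_box in Hb. apply outside_spec in HjG. unfold is_pt.
    split; [rewrite (proj1 Hb); apply HG|]; assumption.
  - apply le_INR in Hn. simpl (INR 1) in Hn.
    assert (HdR : 1 <= INR d) by (apply le_INR in Hd; exact Hd).
    pose proof (Rpower_pos (INR n) (s / INR d)).
    assert (Hrow : forall i, In i G ->
        / (2 * Rpower (INR n) (s / INR d)) <= Rsum (map (fun j => kern d s i j) L)).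
    { intros i Hi. eapply Rle_trans; [|apply (Rsum_map_incl _ (filter (outside G) (box i r)))].
      - eapply Rle_trans; [|apply row_sum_outside_ge; auto; lra].
        apply Rinv_le_contravar; [apply Rpower_pos | exact Hrs].
      - apply NoDup_filter, NoDup_box.
      - intros j Hj. unfold L. rewrite nodup_In, in_flat_map. eauto.
      - intros; apply kern_nonneg. }
    eapply Rle_trans; [|apply Rsum_map_ge_const; exact Hrow]. fold n.
    rewrite rpow_Rpower by lra.
    replace ((INR d - s) / INR d) with (1 + - (s / INR d)) by (field; lra).
    rewrite Rpower_plus, Rpower_1, Rpower_Ropp by lra.
    right. field. lra.
Qed.

Theorem mainTheorem11 (d : nat) (hd : (2 <= d)%nat) (s : R) (hs : 0 < s < 1) :
  exists c : R, 0 < c /\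
    forall G : list (list Z), NoDup G -> Forall (is_pt d) G ->
      exists S : R, boundary_sum d s G S /\
        S >= c * rpow (INR (length G)) ((INR d - s) / INR d).
Proof.
  exists (/ 2). split; [lra|]. intros G HN HG.
  destruct (boundary_sum_exists d s G ltac:(lra) HG) as [S HS].
  destruct (partial_sums_lower_bound d s G ltac:(lia) ltac:(lra) HN HG) as [r [Hr Hle]].
  exists S. split; [exact HS|].
  apply Rle_ge, (Rle_trans _ r); [exact Hle | exact (proj1 HS r Hr)].
Qed.
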